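(* Consider the system \[ \begin{aligned} \frac{dS}{dt}&= B-\beta S(t)\int_{t_0}^{h_1} f_{T_1}(s)e^{-\mu_v s}G(I(t-s))\,ds-\mu S(t)+\alpha\int_{t_0}^{\infty} f_{T_3}(r)I(t-r)e^{-\mu r}\,dr,\\ \frac{dE}{dt}&= \beta S(t)\int_{t_0}^{h_1} f_{T_1}(s)e^{-\mu_v s}G(I(t-s))\,ds-\mu E(t)-\beta\int_{t_0}^{h_2} f_{T_2}(u)S(t-u)\int_{t_0}^{h_1} f_{T_1}(s)e^{-\mu_v s-\mu u}G(I(t-s-u))\,ds\,du,\\ \frac{dI}{dt}&= \beta\int_{t_0}^{h_2} f_{T_2}(u)S(t-u)\int_{t_0}^{h_1} f_{T_1}(s)e^{-\mu_v s-\mu u}G(I(t-s-u))\,ds\,du-(\mu+d+\alpha)I(t),\\ \frac{dR}{dt}&= \alpha I(t)-\mu R(t)-\alpha\int_{t_0}^{\infty} f_{T_3}(r)I(t-r)e^{-\mu r}\,dr, \end{aligned} \] with initial conditions $(S,E,I,R)(t)=(\varphi_1,\varphi_2,\varphi_3,\varphi_4)(t)$, $t\le t_0$, $\varphi_k\in UC_g$, $\varphi_k(t_0)>0$. The unique positive solutions $Y(t)=(S(t),E(t),I(t),R(t))$, $t\ge t_0$, of this system that lie in the self-invariant closed ball $D(\infty)$ in $\mathbb{R}^4_+$ centered at the origin with radius $B/\mu\equiv1$ also lie in the smaller set $D^{expl}(\infty)\subset D(\infty)$, where \[ D^{expl}(\infty)=\left\{Y(t)\in\mathbb{R}^4_+:\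 \frac{B}{\mu+d}\le N(t)=S(t)+E(t)+I(t)+R(t)\le\frac{B}{\mu},\ \forall t\in(-\infty,\infty)\right\}. \] Moreover, $D^{expl}(\infty)$ is also self-invariant with respect to the system.
   Context: Constants: $t_0\ge0$, $h_1,h_2>0$, $B,\beta,\mu,\mu_v,\alpha>0$, $d\ge0$, with $B/\mu=1$. $T_1,T_2,T_3$ are random delays with probability densities $f_{T_1}$ on $[t_0,h_1]$, $f_{T_2}$ on $[t_0,h_2]$, $f_{T_3}$ on $[t_0,\infty)$. $G:[0,\infty)\to[0,\infty)$ satisfies: (A1) $G(0)=0$; (A2) $G$ strictly monotonic; (A3) $G\in C^2$ and $G''<0$; (A4) $\lim_{I\to\infty}G(I)=C\in[0,\infty)$; (A5) $G(I)\le I$ for $I>0$; (A6) $\left(\frac{G(x)}{x}-\frac{G(y)}{y}\right)(G(x)-G(y))\le0$ for all $x,y\ge0$. $UC_g$ is the space of continuous $\varphi:(-\infty,t_0]\to\mathbb{R}_+$ with $\sup_{t\le t_0}|\varphi(t)|/g(t)<\infty$ and $|\varphi|/g$ uniformly continuous, for a continuous non-increasing $g\ge1$ with $g(t_0)=1$, $\lim_{u\to t_0^-}g(t+u)/g(t)=1$ uniformly in $t\ge t_0$, $\lim_{t\to-\infty}g(t)=\infty$. *)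

From HB Require Import structures.
From mathcomp Require Import all_boot all_order all_algebra.
From mathcomp Require Import all_classical all_reals all_analysis.
Set Implicit Arguments. Unset Strict Implicit. Unset Printing Implicit Defensive.
Import Order.TTheory GRing.Theory Num.Theory.
Import numFieldNormedType.Exports.
Local Open Scope classical_set_scope.
Local Open Scope ring_scope.

Section Defs.
Variable R : realType.

Definition Lint (A : set R) (f : R -> R) : R :=
  Rintegral (@lebesgue_measure R) A f.

Definition density_on (A : set R) (f : R -> R) : Prop :=
  (forall x, 0 <= f x) /\ (forall x, ~ A x -> f x = 0) /\
  (@lebesgue_measure R).-integrable A (EFin \o f) /\
  (\int[@lebesgue_measure R]_(x in A) (f x)%:E = 1)%E.

Definition admissible_g (t0 : R) (g : R -> R) : Prop :=
  {within `]-oo, t0], continuous g} /\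
  {in `]-oo, t0] &, forall x y, x <= y -> g y <= g x} /\
  (forall t, t <= t0 -> 1 <= g t) /\ g t0 = 1 /\
  (forall e : R, 0 < e -> exists2 dl : R, 0 < dl &
     forall u t, t0 - dl < u < t0 -> t0 <= t ->
       `| g (t + u) / g t - 1 | < e) /\
  (g t @[t --> -oo] --> +oo).

Definition UC_g (t0 : R) (g : R -> R) (phi : R -> R) : Prop :=
  (forall t, t <= t0 -> 0 <= phi t) /\
  {within `]-oo, t0], continuous phi} /\
  (exists M : R, forall t, t <= t0 -> `|phi t| / g t <= M) /\
  (forall e : R, 0 < e -> exists2 dl : R, 0 < dl &
     forall x y, x <= t0 -> y <= t0 -> `|x - y| < dl ->
       `| `|phi x| / g x - `|phi y| / g y | < e).

Definition G_assumptions (G : R -> R) : Prop :=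
  (forall x, 0 <= x -> 0 <= G x) /\
  G 0 = 0 /\
  ({in `[0, +oo[ &, forall x y, x < y -> G x < G y} \/
              {in `[0, +oo[ &, forall x y, x < y -> G y < G x}) /\
  (forall x, 0 <= x ->
                derivable G x 1 /\ derivable (derive1 G) x 1 /\
                {for x, continuous (derive1 (derive1 G))} /\ derive1 (derive1 G) x < 0) /\
  (exists2 C : R, 0 <= C & G x @[x --> +oo] --> C) /\
  (forall x, 0 < x -> G x <= x) /\
  (forall x y, 0 < x -> 0 < y ->
                (G x / x - G y / y) * (G x - G y) <= 0).

Definition infect_term (t0 h1 muv : R) (f1 G I : R -> R) (t : R) : R :=
  Lint `[t0, h1] (fun s => f1 s * expR (- muv * s) * G (I (t - s))).

Definition latent_term (t0 h1 h2 mu muv : R) (f1 f2 G S I : R -> R) (t : R) : R :=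
  Lint `[t0, h2] (fun u => f2 u * S (t - u) *
    Lint `[t0, h1] (fun s => f1 s * expR (- muv * s - mu * u) * G (I (t - s - u)))).

Definition recov_term (t0 mu : R) (f3 I : R -> R) (t : R) : R :=
  Lint `[t0, +oo[ (fun r => f3 r * I (t - r) * expR (- mu * r)).

Definition is_solution (t0 h1 h2 B beta mu muv alpha d : R)
    (f1 f2 f3 G : R -> R) (phi1 phi2 phi3 phi4 S E I Rc : R -> R) : Prop :=
  (forall t, t <= t0 ->
     S t = phi1 t /\ E t = phi2 t /\ I t = phi3 t /\ Rc t = phi4 t) /\
  {within `[t0, +oo[, continuous S} /\ {within `[t0, +oo[, continuous E} /\
  {within `[t0, +oo[, continuous I} /\ {within `[t0, +oo[, continuous Rc} /\
  (forall t, t0 < t ->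
    let A := infect_term t0 h1 muv f1 G I t in
    let L := latent_term t0 h1 h2 mu muv f1 f2 G S I t in
    let Q := recov_term t0 mu f3 I t in
    is_derive t 1 S (B - beta * S t * A - mu * S t + alpha * Q) /\
    is_derive t 1 E (beta * S t * A - mu * E t - beta * L) /\
    is_derive t 1 I (beta * L - (mu + d + alpha) * I t) /\
    is_derive t 1 Rc (alpha * I t - mu * Rc t - alpha * Q)).

End Defs.

From HB Require Import structures.
From mathcomp Require Import all_boot all_order all_algebra.
From mathcomp Require Import all_classical all_reals all_analysis.
From mathcomp Require Import ring lra.
Import Order.TTheory GRing.Theory Num.Theory.
Import numFieldNormedType.Exports.
Local Open Scope classical_set_scope.
Local Open Scope ring_scope.

(* Adding the four equations, the delay terms cancel and the total population
   satisfies N' = B - mu N - d I >= B - (mu + d) N, because I <= N.  This linear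
   differential inequality makes (N - K) exp((mu + d) t) nondecreasing, with
   K = B / (mu + d).  Hence N(t) - K >= (N(t0) - K) exp(-(mu + d)(t - t0)): the
   deficit below K decays exponentially, and it never appears when
   N(t0) >= K. *)

Lemma is_derive_expRM {R : realType} (c t : R) :
  is_derive t 1 (fun x => expR (c * x)) (c * expR (c * t)).
Proof.
have dcx : is_derive t 1 ( *%R c) c.
  have := is_deriveZ c (is_derive_id t 1).
  by move=> /is_derive_eq; apply; rewrite /GRing.scale /= mulr1.
by have := is_derive1_comp (f := expR) (g := *%R c); rewrite /comp mulrC; apply.
Qed.

Section linear_differential_inequality.
Context {R : realType} {f f' : R -> R} {c K t0 : R}.
Hypothesis f_cont : {within `[t0, +oo[, continuous f}.
Hypothesis f_deriv : forall t, t0 < t -> is_derive t 1 f (f' t).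
Hypothesis f'_ge : forall t, t0 < t -> c * (K - f t) <= f' t.

Lemma weighted_deviation_ndecr {x y : R} : t0 <= x -> x <= y ->
  (f x - K) * expR (c * x) <= (f y - K) * expR (c * y).
Proof.
pose W t := (f t - K) * expR (c * t).
have dW t : t0 < t -> is_derive t 1 W ((f' t + c * (f t - K)) * expR (c * t)).
  move=> /f_deriv df.
  have := is_deriveM (is_deriveB df (is_derive_cst K t 1)) (is_derive_expRM c t).
  move=> /is_derive_eq; apply; rewrite /GRing.scale /=.
  by have -> : (f - cst K) t = f t - K by []; ring.
move=> x_ge x_le; change (W x <= W y); apply: (ger0_derive1_ndecry _ _ _ x_ge x_le).
- by move=> t; rewrite in_itv /= andbT => /dW [].
- move=> t; rewrite in_itv /= andbT => ht.
  have dWt := dW t ht; rewrite derive1E derive_val mulr_ge0 ?expR_ge0 //.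
  by have := f'_ge t ht; lra.
- move=> t; apply: cvgM; first by apply: cvgB; [exact: f_cont | exact: cvg_cst].
  apply: continuous_subspaceT => {}t.
  apply: continuous_comp; [exact: mulrl_continuous | exact: continuous_expR].
Qed.

Lemma deviation_ge_initial (t : R) : t0 <= t ->
  f t0 - K <= (f t - K) * expR (c * (t - t0)).
Proof.
move=> ht; have := weighted_deviation_ndecr (lexx t0) ht.
have -> : c * t = c * t0 + c * (t - t0) by ring.
by rewrite expRD mulrA [X in _ <= X]mulrAC ler_pM2r ?expR_gt0.
Qed.

End linear_differential_inequality.

Section exponentially_decaying_deficit.
Context {R : realType} {f : R -> R} {a c K t0 : R}.
Hypothesis deviation_ge : forall t, t0 <= t -> a <= (f t - K) * expR (c * (t - t0)).

Lemma deficit_vanishes_eventually : 0 < c ->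
  forall e, 0 < e -> \forall t \near +oo, K - e <= f t.
Proof.
move=> c_gt0 e e_gt0; near=> t.
have t_gt : t0 + `|a| / (c * e) < t by near: t; apply: nbhs_pinfty_gt; exact: num_real.
have a_lt : `|a| < e * c * (t - t0).
  rewrite -ltrBrDl ltr_pdivrMr ?mulr_gt0 // in t_gt; lra.
have /deviation_ge : t0 <= t.
  by apply/ltW/(le_lt_trans _ t_gt); rewrite lerDl divr_ge0 ?mulr_ge0 // ltW.
have := expR_ge1Dx (c * (t - t0)); have := expR_gt0 (c * (t - t0)).
set x := expR _ => x_gt0 x_ge a_le.
rewrite leNgt; apply/negP => f_lt.
have : (f t - K) * x < - e * x by rewrite ltr_pM2r //; lra.
have : e * (1 + c * (t - t0)) <= e * x by rewrite ler_pM2l.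
by have := ler_norm (- a); rewrite normrN; lra.
Unshelve. all: end_near.
Qed.

Lemma deficit_absent : 0 <= a -> forall t, t0 <= t -> K <= f t.
Proof.
move=> a_ge0 t /deviation_ge; have := expR_gt0 (c * (t - t0)); nra.
Qed.

End exponentially_decaying_deficit.

Lemma is_solution_total_derive {R : realType} {t0 h1 h2 B beta mu muv alpha d : R}
    {f1 f2 f3 G phi1 phi2 phi3 phi4 S E I Rc : R -> R} :
  is_solution t0 h1 h2 B beta mu muv alpha d f1 f2 f3 G
    phi1 phi2 phi3 phi4 S E I Rc ->
  forall t, t0 < t -> is_derive t 1 (fun x => S x + E x + I x + Rc x)
    (B - mu * (S t + E t + I t + Rc t) - d * I t).
Proof.
case=> _ [_ [_ [_ [_ hder]]]] t /hder [dS [dE [dI dR]]].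
have := is_deriveD (is_deriveD (is_deriveD dS dE) dI) dR.
by move=> /is_derive_eq; apply; ring.
Qed.

Theorem theorem2 (R : realType) (t0 h1 h2 B beta mu muv alpha d : R)
  (f1 f2 f3 G g : R -> R)
  (ht0 : 0 <= t0) (hh1 : 0 < h1) (hh2 : 0 < h2)
  (hB : 0 < B) (hbeta : 0 < beta) (hmu : 0 < mu) (hmuv : 0 < muv)
  (halpha : 0 < alpha) (hd : 0 <= d) (hBmu : B / mu = 1)
  (hf1 : density_on `[t0, h1] f1) (hf2 : density_on `[t0, h2] f2)
  (hf3 : density_on `[t0, +oo[ f3)
  (hG : G_assumptions G) (hg : admissible_g t0 g)
  (phi1 phi2 phi3 phi4 S E I Rc : R -> R)
  (hphi1 : UC_g t0 g phi1) (hphi2 : UC_g t0 g phi2)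
  (hphi3 : UC_g t0 g phi3) (hphi4 : UC_g t0 g phi4)
  (hphi0 : 0 < phi1 t0 /\ 0 < phi2 t0 /\ 0 < phi3 t0 /\ 0 < phi4 t0)
  (hsol : is_solution t0 h1 h2 B beta mu muv alpha d f1 f2 f3 G
            phi1 phi2 phi3 phi4 S E I Rc)
  (hpos : forall t, t0 <= t -> 0 < S t /\ 0 < E t /\ 0 < I t /\ 0 < Rc t)
  (hD : forall t, t0 <= t -> S t + E t + I t + Rc t <= B / mu) :
  let N := fun t => S t + E t + I t + Rc t in
  (* the solution lies in D^expl(oo): N <= B/mu, and eventually N >= B/(mu+d) *)
  ((forall t, t0 <= t -> N t <= B / mu) /\
   (forall e : R, 0 < e -> \forall t \near +oo, B / (mu + d) - e <= N t)) /\
  (* self-invariance of D^expl(oo) *)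
  (B / (mu + d) <= N t0 ->
     forall t, t0 <= t -> B / (mu + d) <= N t <= B / mu).
Proof.
move=> N.
have c_gt0 : 0 < mu + d by rewrite ltr_wpDr.
have N_cont : {within `[t0, +oo[, continuous N}.
  case: hsol => _ [cS [cE [cI [cR _]]]].
  by do 3![apply: within_continuousD => //].
have N'_ge t : t0 < t ->
    (mu + d) * (B / (mu + d) - N t) <= B - mu * N t - d * I t.
  move=> /ltW /hpos [? [? [? ?]]].
  have dI_le : d * I t <= d * N t by rewrite ler_wpM2l // /N; lra.
  by rewrite mulrBr mulrC divfK ?gt_eqF //; lra.
have deviation_ge := deviation_ge_initial N_cont (is_solution_total_derive hsol) N'_ge.
split; first by split=> //; exact: deficit_vanishes_eventually deviation_ge c_gt0.
move=> N0_ge t ht; rewrite hD // andbT.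
by apply: deficit_absent deviation_ge _ t ht; rewrite subr_ge0.
Qed.
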